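(* Let $\bar Q$ be a locally gentle bound quiver, let $F$ be a finite face of the non-kissing complex $\mathcal K_{nk}(\bar Q)$, let $\omega\in F$, and let $\alpha$ be an (occurrence of an) arrow on $\omega$. Assume $\omega$ is not an infinite straight walk. Then there is an arrow $\beta$ on $\omega$, traversed by $\omega$ in the same direction as $\alpha$ (i.e., with the same exponent $\pm1$ once an orientation of $\omega$ is fixed), such that $\omega$ marked at $\beta$ is maximal in $F_\beta$ for the countercurrent order $\prec_\beta$.
   Context: Locally gentle bound quiver $\bar Q=(Q,I)$: $Q$ finite, $I$ an ideal of $kQ$ generated by paths of length two ($kQ/I$ possibly infinite-dimensional), each vertex with at most two incoming and two outgoing arrows, and for each arrow $\beta$ at most one $\alpha$ with $t(\alpha)=s(\beta)$, $\alpha\beta\notin I$, at most one with $\alpha\beta\in I$, and symmetrically on the outgoing side. $\bar Q^{\mathrm{bl}}$ adds degree-one blossom vertices and arrows so each vertex of $Q_0$ has two incoming and two outgoing arrows, relations completed to stay locally gentle. A walk is a maximal (finite, or eventually cyclic ${}^\infty(c_1^{\varepsilon_1})\sigma(c_2^{\varepsilon_2})^\infty$) string of $\bar Q^{\mathrm{bl}}$, a string being a composable reduced word in arrows and formal inverses with no factor $\pi^{\pm1}$ for a path $\pi\in I$; $\omega\equiv\omega^{-1}$. A walk is straight if it or its inverse is a path; an infinite straight walk is one of the form ${}^\infty c^\infty=\cdots ccc\cdots$. A substring $\prod_{i'<\ell<j'}\alpha_\ell^{\varepsilon_\ell}$ of $\omega=\prod_{i<\ell<j}\alpha_\ell^{\varepsilon_\ell}$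 ($i\le i'<j'\le j$, strict at finite ends, with position) is on top if ($i'=-\infty$ or $\varepsilon_{i'}=-1$) and ($j'=\infty$ or $\varepsilon_{j'}=1$), at the bottom if ($i'=-\infty$ or $\varepsilon_{i'}=1$) and ($j'=\infty$ or $\varepsilon_{j'}=-1$). $\omega$ kisses $\omega'$ if a finite string is a top substring of $\omega$ and a bottom substring of $\omega'$. Faces of $\mathcal K_{nk}(\bar Q)$ are sets of pairwise non-kissing walks (none kissing itself). Marked walks and countercurrent order: a marked walk is a walk with a marked occurrence of an arrow $\alpha^{\pm1}$ (for infinite straight walks all markings at $\alpha$ are identified); $F_\alpha$ is the set of walks of $F$ marked at an occurrence of $\alpha^{\pm1}$. For distinct non-kissing $\mu_\star,\nu_\star$ marked at $\alpha$, with $\sigma$ their maximal common substring containing the marked occurrence, $\mu_\star\prec_\alpha\nu_\star$ if $\mu_\star$ enters and/or exits $\sigma$ in the direction pointed by $\alpha$ while $\nu_\star$ enters and/or exits $\sigma$ in the opposite direction. *)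

From Stdlib Require List.
From HB Require Import structures.
From mathcomp Require Import all_boot all_order all_algebra.
Set Implicit Arguments. Unset Strict Implicit. Unset Printing Implicit Defensive.
Import Order.TTheory GRing.Theory Num.Theory.
Local Open Scope ring_scope.

(* Bound quivers whose ideal is generated by paths of length two.       *)
(* [qrel a b] means that the path "a b" (first a, then b, so            *)
(* qtgt a = qsrc b) belongs to the ideal I.                             *)
Record bquiver := BQuiver {
  qvert : finType;
  qarr  : finType;
  qsrc  : qarr -> qvert;
  qtgt  : qarr -> qvert;
  qrel  : qarr -> qarr -> bool }.

Definition locally_gentle (Q : bquiver) : Prop :=
  [/\ (forall a b : qarr Q, qrel a b -> qtgt a = qsrc b),
      (forall v : qvert Q, #|[pred a : qarr Q | qtgt a == v]| <= 2)%N,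
      (forall v : qvert Q, #|[pred a : qarr Q | qsrc a == v]| <= 2)%N,
      (forall b : qarr Q,
         (#|[pred a : qarr Q | (qtgt a == qsrc b) && ~~ qrel a b]| <= 1)%N /\
         (#|[pred a : qarr Q | (qtgt a == qsrc b) && qrel a b]| <= 1)%N) &
      (forall a : qarr Q,
         (#|[pred b : qarr Q | (qtgt a == qsrc b) && ~~ qrel a b]| <= 1)%N /\
         (#|[pred b : qarr Q | (qtgt a == qsrc b) && qrel a b]| <= 1)%N)].

Definition indeg (Q : bquiver) (v : qvert Q) : nat := #|[pred a : qarr Q | qtgt a == v]|.
Definition outdeg (Q : bquiver) (v : qvert Q) : nat := #|[pred a : qarr Q | qsrc a == v]|.

Definition is_blossoming (Q Qbl : bquiver)
    (iv : qvert Q -> qvert Qbl) (ia : qarr Q -> qarr Qbl) : Prop :=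
  [/\ injective iv /\ injective ia,
      (forall a, qsrc (ia a) = iv (qsrc a) /\ qtgt (ia a) = iv (qtgt a)),
      (forall a b, qrel (ia a) (ia b) = qrel a b),
      (forall v, indeg (iv v) = 2%N /\ outdeg (iv v) = 2%N) &
      [/\ (forall w, w \notin codom iv -> (indeg w + outdeg w = 1)%N),
          (forall a', a' \notin codom ia ->
             (qsrc a' \notin codom iv) || (qtgt a' \notin codom iv)),
          (forall a', (qsrc a' \in codom iv) || (qtgt a' \in codom iv)) &
          locally_gentle Qbl]].

(* A letter is (a, true) for the arrow a and (a, false) for a^{-1}.     *)
Section Walks.
Variable Q : bquiver.

Definition letter := (qarr Q * bool)%type.
Definition lsrc (x : letter) : qvert Q := if x.2 then qsrc x.1 else qtgt x.1.
Definition ltgt (x : letter) : qvert Q := if x.2 then qtgt x.1 else qsrc x.1.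
Definition lflip (x : letter) : letter := (x.1, ~~ x.2).

Definition composable (x y : letter) : bool :=
  [&& ltgt x == lsrc y,
      ~~ ((x.1 == y.1) && (x.2 != y.2)),
      ~~ [&& x.2, y.2 & qrel x.1 y.1] &
      ~~ [&& ~~ x.2, ~~ y.2 & qrel y.1 x.1]].

(* A (possibly infinite) word  prod_{lo < l < hi} wlet l,
   with lo = None meaning -oo and hi = None meaning +oo. *)
Record word := Word { wlo : option int; whi : option int; wlet : int -> letter }.

Definition in_dom (w : word) (l : int) : bool :=
  (if wlo w is Some i then i < l else true) &&
  (if whi w is Some j then l < j else true).

Definition is_string (w : word) : Prop :=
  (exists l, in_dom w l) /\
  (forall l, in_dom w l -> in_dom w (l + 1) -> composable (wlet w l) (wlet w (l + 1))).

(* eventually cyclic along an oriented cycle traversed in a fixed direction *)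
Definition left_cyclic (w : word) : Prop :=
  exists (N : int) (p : int), 0 < p /\
    forall l, l <= N -> wlet w (l - p) = wlet w l /\ (wlet w l).2 = (wlet w N).2.
Definition right_cyclic (w : word) : Prop :=
  exists (N : int) (p : int), 0 < p /\
    forall l, N <= l -> wlet w (l + p) = wlet w l /\ (wlet w l).2 = (wlet w N).2.

Definition is_walk (w : word) : Prop :=
  [/\ is_string w,
      (match wlo w with
       | Some i => forall x : letter, ~~ composable x (wlet w (i + 1))
       | None => left_cyclic w end) &
      (match whi w with
       | Some j => forall y : letter, ~~ composable (wlet w (j - 1)) y
       | None => right_cyclic w end)].

Definition is_inf_straight (w : word) : Prop :=
  wlo w = None /\ whi w = None /\ forall l, (wlet w l).2 = (wlet w 0).2.

Definition rev_word (w : word) : word :=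
  Word (omap (fun x => - x) (whi w)) (omap (fun x => - x) (wlo w))
       (fun l => lflip (wlet w (- l))).

(* substring strictly between positions i < j (both letters at i and j exist) *)
Definition top_sub (w : word) (i j : int) : Prop :=
  [/\ i < j, in_dom w i, in_dom w j, (wlet w i).2 = false & (wlet w j).2 = true].
Definition bottom_sub (w : word) (i j : int) : Prop :=
  [/\ i < j, in_dom w i, in_dom w j, (wlet w i).2 = true & (wlet w j).2 = false].

(* the substring of w strictly between i and j equals the substring of w'
   strictly between k and l (as strings, including their start vertex) *)
Definition same_sub (w : word) (i j : int) (w' : word) (k l : int) : Prop :=
  [/\ j - i = l - k, ltgt (wlet w i) = ltgt (wlet w' k) &
      forall d, 0 < d -> d < j - i -> wlet w (i + d) = wlet w' (k + d)].

Definition kiss0 (w w' : word) : Prop :=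
  exists i j k l, [/\ top_sub w i j, bottom_sub w' k l & same_sub w i j w' k l].

(* w kisses w' (walks are considered up to inversion) *)
Definition kisses (w w' : word) : Prop := kiss0 w w' \/ kiss0 w (rev_word w').

Definition is_nk_face (F : seq word) : Prop :=
  (forall w, List.In w F -> is_walk w) /\
  (forall w w', List.In w F -> List.In w' F -> ~ kisses w w').

(* Marked walks.  The view of w marked at position q is the word read   *)
(* from the marked letter, oriented so that the marked letter is direct;*)
(* view d = letter at offset d (None outside the walk).  Two marked     *)
(* walks are equal iff their views coincide (this identifies walks up   *)
(* to shift and inversion, hence identifies all markings at a given     *)
(* arrow of an infinite straight walk).                                 *)
Definition view (w : word) (q : int) : int -> option letter :=
  if (wlet w q).2 then
    fun d => if in_dom w (q + d) then Some (wlet w (q + d)) else None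
  else
    fun d => if in_dom w (q - d) then Some (lflip (wlet w (q - d))) else None.

Definition same_marked (f g : int -> option letter) : Prop := forall d, f d = g d.

(* f exits the maximal common substring sigma (with g, containing offset 0)
   with a letter of exponent b *)
Definition exits_dir (f g : int -> option letter) (b : bool) : Prop :=
  exists r : int, [/\ 0 <= r,
    (forall e, 0 <= e -> e <= r -> f e = g e /\ f e <> None),
    f (r + 1) <> g (r + 1) &
    exists x, f (r + 1) = Some (x, b)].

(* f enters sigma with a letter of exponent b *)
Definition enters_dir (f g : int -> option letter) (b : bool) : Prop :=
  exists k : int, [/\ 0 <= k,
    (forall e, - k <= e -> e <= 0 -> f e = g e /\ f e <> None),
    f (- k - 1) <> g (- k - 1) &
    exists x, f (- k - 1) = Some (x, b)].

(* countercurrent order: mu < nu iff mu enters and/or exits sigma in the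
   direction pointed by the marked arrow, while nu enters and/or exits
   sigma in the opposite direction *)
Definition countercurrent_lt (f g : int -> option letter) : Prop :=
  (enters_dir f g true \/ exits_dir f g true) /\
  (enters_dir g f false \/ exits_dir g f false).

Definition maximal_in_Fbeta (F : seq word) (w : word) (q : int) : Prop :=
  forall nu, List.In nu F -> forall q', in_dom nu q' ->
    (wlet nu q').1 = (wlet w q).1 ->
    ~ same_marked (view w q) (view nu q') ->
    ~ countercurrent_lt (view w q) (view nu q').

End Walks.

From HB Require Import structures.
From mathcomp Require Import all_boot all_order all_algebra.
From mathcomp Require Import zify.
From Stdlib Require Import Classical.
Set Implicit Arguments. Unset Strict Implicit. Unset Printing Implicit Defensive.
Import Order.TTheory GRing.Theory Num.Theory.
Local Open Scope ring_scope.

(* Read the walks of F as partial bi-infinite sequences of letters, and read w from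
   the given arrow, in its direction.  If no letter of w traversed in that direction
   were maximal, each such position would lie on a common substring of w with some
   walk of F at whose finite ends w leaves along the arrow and the other walk
   against it: where two walks part they have opposite exponents by local
   gentleness, and mixed ends would be a kiss.  Two such substrings cannot overlap
   in a staggered way without producing a kiss, so, starting from the given arrow,
   their right ends increase forever or, once one of them is infinite to the right,
   their left ends decrease forever.  But F is finite, its walks have eventually
   constant exponents at both ends, and w is not an infinite straight walk, so
   these ends are bounded. *)

Lemma card_le2_eq (T : finType) (A : {pred T}) x y z : (#|A| <= 2)%N ->
  x \in A -> y \in A -> z \in A -> x != y -> z != y -> x = z.
Proof.
move=> A2 xA yA zA xy zy; apply/eqP; apply: contraTT A2 => xz; rewrite -ltnNge.
by apply/card_gt2P; exists x, y, z; split; split; rewrite // eq_sym.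
Qed.

Lemma list_bound (A : Type) (P : A -> int -> Prop) (s : list A) :
  (forall a, List.In a s -> exists M, forall x, P a x -> x < M) ->
  exists M, forall a, List.In a s -> forall x, P a x -> x < M.
Proof.
elim: s => [|a s IH] bnd; first by exists 0.
have [M1 H1] := bnd a (or_introl erefl).
have [M2 H2] := IH (fun b sb => bnd b (or_intror sb)).
by exists (Num.max M1 M2) => b [<-|sb] x Pbx; [have := H1 x Pbx | have := H2 b sb x Pbx]; lia.
Qed.

Section Tracks.
Variable Q : bquiver.
Implicit Types (x y z : letter Q) (w mu nu : word Q).

Lemma lflipK : involutive (@lflip Q).
Proof. by case=> a b; rewrite /lflip /= negbK. Qed.

Lemma composable_flip x y : composable x y -> composable (lflip y) (lflip x).
Proof.
case: x y => [a b] [c d]; rewrite /composable /lflip /ltgt /lsrc /= => /and4P [e1 e2 e3 e4].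
apply/and4P; split.
- by move: e1; case: (b); case: (d) => /=; rewrite eq_sym.
- by rewrite eq_sym (eq_sym (~~ d)) (inj_eq negb_inj).
- by rewrite ?negbK; move: e4; case: (b); case: (d).
- by rewrite ?negbK; move: e3; case: (b); case: (d).
Qed.

Lemma composable_ltgt x y : composable x y -> ltgt x = lsrc y.
Proof. by case/and4P => /eqP. Qed.

Lemma composable_succ_uniq x y1 y2 : locally_gentle Q ->
  composable x y1 -> composable x y2 -> y1.2 = y2.2 -> y1 = y2.
Proof.
case=> _ Hin Hout Hpred Hsucc.
case: x y1 y2 => [a b] [c1 d1] [c2 d2]; rewrite /composable /ltgt /lsrc /= => + + E.
subst d2 => /and4P [/eqP e1 n1 r1 s1] /and4P [/eqP e2 n2 r2 s2]; congr pair.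
move: e1 n1 r1 s1 e2 n2 r2 s2; case: b; case: d1; rewrite /= ?andbT ?andbF.
- move=> e1 _ r1 _ e2 _ r2 _; apply: (card_le1_eqP (Hsucc a).1);
    by rewrite inE -?e1 -?e2 ?eqxx ?r1 ?r2.
- move=> e1 n1 _ _ e2 n2 _ _; apply: (card_le2_eq (Hin (qtgt a)) (y := a));
    by rewrite ?inE -?e1 -?e2 ?eqxx // eq_sym.
- move=> e1 n1 _ _ e2 n2 _ _; apply: (card_le2_eq (Hout (qsrc a)) (y := a));
    by rewrite ?inE -?e1 -?e2 ?eqxx // eq_sym.
- move=> e1 _ _ r1 e2 _ _ r2; apply: (card_le1_eqP (Hpred a).1);
    by rewrite inE -?e1 -?e2 ?eqxx ?r1 ?r2.
Qed.

Definition track := int -> option (letter Q).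
Implicit Types (s t f g h : track).

Definition dir (o : option (letter Q)) : option bool := omap snd o.
Definition has_dir (o : option (letter Q)) (b : bool) : bool := dir o == Some b.

Lemma has_dirP o b : reflect (exists2 x, o = Some x & x.2 = b) (has_dir o b).
Proof.
case: o => [x|]; apply: (iffP eqP) => /=.
- by move=> [E]; exists x.
- by case=> y [<-] <-.
- by [].
- by case.
Qed.

Lemma has_dir_true_false o : has_dir o true -> ~~ has_dir o false.
Proof. by rewrite /has_dir => /eqP ->. Qed.

Definition splits f g e := has_dir (f e) true && has_dir (g e) false.
Definition diverge f g e := splits f g e || splits g f e.

Lemma diverge_splits f g e : diverge f g e -> has_dir (f e) true -> splits f g e.
Proof. by case/orP => // /andP [_ fF] /has_dir_true_false; rewrite fF. Qed.

Definition shift (c : int) s : track := fun e => s (c + e).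
Definition mirror s : track := fun e => s (- e).
Definition rev_track s : track := fun e => omap (@lflip Q) (s (- e)).

Lemma omap_lflipK : involutive (omap (@lflip Q)).
Proof. by case=> //= x; rewrite lflipK. Qed.

Lemma has_dir_rev s e b : has_dir (rev_track s e) b = has_dir (s (- e)) (~~ b).
Proof. by rewrite /rev_track /has_dir /dir; case: (s (- e)) => //= x; case: b; case: (x.2). Qed.

Lemma splits_rev f g e : splits (rev_track g) (rev_track f) e = splits f g (- e).
Proof. by rewrite /splits !has_dir_rev andbC. Qed.

Lemma diverge_rev f g e : diverge (rev_track f) (rev_track g) e = diverge f g (- e).
Proof. by rewrite /diverge !splits_rev orbC. Qed.

Definition convex s :=
  forall a b e, a <= e <= b -> s a <> None -> s b <> None -> s e <> None.
Definition chain s :=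
  forall e x y, s e = Some x -> s (e + 1) = Some y -> composable x y.
Definition stops_right s :=
  forall e x y, s e = Some x -> s (e + 1) = None -> ~~ composable x y.
Definition stops_left s :=
  forall e x y, s e = None -> s (e + 1) = Some y -> ~~ composable x y.
Definition walk_track s := [/\ convex s, chain s, stops_right s & stops_left s].

Lemma walk_track_eq s t : s =1 t -> walk_track s -> walk_track t.
Proof.
move=> E [cv ch sR sL]; split=> [a b e|e x y|e x y|e x y]; rewrite -!E;
  [exact: cv | exact: ch | exact: sR | exact: sL].
Qed.

Lemma walk_track_shift c s : walk_track s -> walk_track (shift c s).
Proof.
move=> [cv ch sR sL]; rewrite /shift; split=> [a b e ab|e x y|e x y|e x y];
  rewrite ?addrA; [apply: cv; lia | exact: ch | exact: sR | exact: sL].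
Qed.

Lemma walk_track_rev s : walk_track s -> walk_track (rev_track s).
Proof.
move=> [cv ch sR sL]; have Ee (e : int) : - (e + 1) + 1 = - e by lia.
rewrite /rev_track; split.
- move=> a b e ab; case Ea: (s (- a)) => // _; case Eb: (s (- b)) => // _.
  have : s (- e) <> None by apply: (cv (- b) (- a)); rewrite ?Ea ?Eb //; lia.
  by case: (s (- e)).
- move=> e x y; case E0: (s (- e)) => [x'|] //= [<-].
  case E1: (s (- (e + 1))) => [y'|] //= [<-].
  by apply: composable_flip; apply: ch E1 _; rewrite Ee.
- move=> e x y; case E0: (s (- e)) => [x'|] //= [<-]; case E1: (s (- (e + 1))) => //= _.
  apply/negP => /composable_flip; rewrite lflipK; apply/negP/sL; first exact: E1.
  by rewrite Ee.
- move=> e x y; case E0: (s (- e)) => //= _; case E1: (s (- (e + 1))) => [y'|] //= [<-].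
  apply/negP => /composable_flip; rewrite lflipK; apply/negP/sR; first exact: E1.
  by rewrite Ee.
Qed.

Definition track_of w : track :=
  fun e => if in_dom w e then Some (wlet w e) else None.

Lemma track_ofE w e : in_dom w e -> track_of w e = Some (wlet w e).
Proof. by rewrite /track_of => ->. Qed.

Lemma track_of_Some w e x : track_of w e = Some x -> in_dom w e /\ wlet w e = x.
Proof. by rewrite /track_of; case: ifP => // d [<-]. Qed.

Lemma track_of_None w e : track_of w e = None -> ~~ in_dom w e.
Proof. by rewrite /track_of; case: ifP. Qed.

Lemma has_dir_track_of w e b :
  has_dir (track_of w e) b = in_dom w e && ((wlet w e).2 == b).
Proof. by rewrite /track_of; case: ifP. Qed.

Lemma in_dom_convex w a b e : a <= e <= b -> in_dom w a -> in_dom w b -> in_dom w e.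
Proof. by rewrite /in_dom; case: (wlo w) => [i|]; case: (whi w) => [j|] /=; lia. Qed.

Lemma walk_track_of w : is_walk w -> walk_track (track_of w).
Proof.
case=> [[_ ch] lo hi]; split.
- move=> a b e ab; rewrite /track_of; case: ifP => // da _; case: ifP => // db _.
  by rewrite (in_dom_convex ab da db).
- by move=> e x y /track_of_Some [d1 <-] /track_of_Some [d2 <-]; apply: ch.
- move=> e x y /track_of_Some [d1 <-] /track_of_None; move: hi d1; rewrite /in_dom.
  case: (whi w) => [j|] hi; last by rewrite !andbT; case: (wlo w) => //= i; lia.
  by case: (wlo w) => [i|] /= d1 d2; have -> : e = j - 1 by lia.
- move=> e x y /track_of_None + /track_of_Some [d2 <-]; move: lo d2; rewrite /in_dom.
  case: (wlo w) => [i|] lo; last by case: (whi w) => //= j; lia.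
  by case: (whi w) => [j|] /= d1 d2; have -> : e = i by lia.
Qed.

Definition dir_const_right s := exists N, forall e, N <= e -> dir (s e) = dir (s N).
Definition dir_tails_const s := dir_const_right s /\ dir_const_right (mirror s).

Lemma dir_const_right_transfer c (op : option bool -> option bool) s t :
  (forall e, dir (t e) = op (dir (s (c + e)))) -> dir_const_right s -> dir_const_right t.
Proof.
move=> E [N HN]; exists (N - c) => e le; rewrite !E !HN //; lia.
Qed.

Lemma dir_tails_const_eq s t : s =1 t -> dir_tails_const s -> dir_tails_const t.
Proof.
move=> E [R L]; split; [apply: (dir_const_right_transfer (c := 0) (op := id)) R |
  apply: (dir_const_right_transfer (c := 0) (op := id)) L] => e;
by rewrite add0r /mirror E.
Qed.

Lemma dir_tails_const_shift c s : dir_tails_const s -> dir_tails_const (shift c s).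
Proof.
case=> R L; split; [apply: (dir_const_right_transfer (op := id)) R |
  apply: (dir_const_right_transfer (c := - c) (op := id)) L] => e //.
by rewrite /mirror /shift opprD opprK.
Qed.

Lemma dir_tails_const_rev s : dir_tails_const s -> dir_tails_const (rev_track s).
Proof.
have dir_flip o : dir (omap (@lflip Q) o) = omap negb (dir o) by case: o.
case=> R L; split; [apply: (dir_const_right_transfer (c := 0)) L |
  apply: (dir_const_right_transfer (c := 0)) R] => e;
by rewrite /mirror /rev_track ?opprK add0r dir_flip.
Qed.

Lemma dir_tails_const_of w : is_walk w -> dir_tails_const (track_of w).
Proof.
case=> _ lo hi; split.
- case E: (whi w) hi => [j|] hi.
    exists j => e je; have /negPf ej : ~~ (e < j) by lia.
    by rewrite /track_of /in_dom E ej ltxx !andbF.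
  case: hi => N [p [_ Hp]].
  have [N' [NN' dN']] : exists N', N <= N' /\ forall e, N' <= e -> in_dom w e.
    exists (if wlo w is Some i then Num.max N (i + 1) else N).
    by rewrite /in_dom E; case: (wlo w) => [i|] /=; split=> *; lia.
  exists N' => e le; rewrite /dir !track_ofE ?dN' //= (Hp e _).2 ?(Hp N' _).2 //; lia.
- case E: (wlo w) lo => [i|] lo.
    exists (- i) => e je; have /negPf ie : ~~ (i < - e) by lia.
    by rewrite /mirror /track_of /in_dom E /= ie opprK ltxx.
  case: lo => N [p [_ Hp]].
  have [N' [NN' dN']] : exists N', - N <= N' /\ forall e, N' <= e -> in_dom w (- e).
    exists (if whi w is Some j then Num.max (- N) (1 - j) else - N).
    by rewrite /in_dom E; case: (whi w) => [j|] /=; split=> *; lia.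
  exists N' => e le; rewrite /mirror /dir !track_ofE ?dN' //= (Hp (- e) _).2 ?(Hp (- N') _).2 //; lia.
Qed.

Definition reading g w :=
  exists c, g =1 shift c (track_of w) \/ g =1 shift c (rev_track (track_of w)).

Lemma reading_walk_track g w : is_walk w -> reading g w -> walk_track g.
Proof.
move=> /walk_track_of W [c [E|E]]; apply: walk_track_eq (fun e => esym (E e)) _;
  apply: walk_track_shift => //; exact: walk_track_rev.
Qed.

Lemma reading_dir_tails_const g w : is_walk w -> reading g w -> dir_tails_const g.
Proof.
move=> /dir_tails_const_of D [c [E|E]]; apply: dir_tails_const_eq (fun e => esym (E e)) _;
  apply: dir_tails_const_shift => //; exact: dir_tails_const_rev.
Qed.

Lemma reading_shift d g w : reading g w -> reading (shift d g) w.
Proof. by case=> c [E|E]; exists (c + d); [left|right] => e; rewrite /shift E /shift addrA. Qed.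

Lemma viewE w q : view w q =1
  if (wlet w q).2 then shift q (track_of w) else shift (- q) (rev_track (track_of w)).
Proof.
move=> e; rewrite /view /shift /rev_track /track_of; case: ifP => _ //.
by rewrite opprD opprK addrC; case: ifP.
Qed.

Lemma view_reading w q : reading (view w q) w.
Proof. by exists (if (wlet w q).2 then q else - q); case: ifP (viewE w q) => _; [left|right]. Qed.

(* [s] kisses [t]: the common substring strictly between [a] and [b] is on top
   of [s] and at the bottom of [t]. *)
Definition kiss s t := exists a b, [/\ a < b, splits t s a, splits s t b,
  forall e, a < e < b -> s e = t e &
  omap (@ltgt Q) (s a) = omap (@ltgt Q) (t a) /\
  omap (@lsrc Q) (s b) = omap (@lsrc Q) (t b)].

Lemma kiss_rev s t : kiss s t -> kiss (rev_track s) (rev_track t).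
Proof.
have vtx o : omap (@ltgt Q) (omap (@lflip Q) o) = omap (@lsrc Q) o by case: o => [[? []]|].
have vsc o : omap (@lsrc Q) (omap (@lflip Q) o) = omap (@ltgt Q) o by case: o => [[? []]|].
case=> a [b [ab sa sb st [va vb]]]; exists (- b), (- a).
rewrite !splits_rev !opprK /rev_track !opprK !vtx !vsc; split=> // [|e /andP [e1 e2]]; first lia.
by rewrite st //; lia.
Qed.

Lemma kiss_kiss0 s t mu nu c1 c2 : s =1 shift c1 (track_of mu) ->
  t =1 shift c2 (track_of nu) -> kiss s t -> kiss0 mu nu.
Proof.
move=> Es Et [a [b [ab sa sb st [vt _]]]].
move: sa sb vt; rewrite /splits !Es !Et /shift !has_dir_track_of.
case/andP=> /andP [da' /eqP ta] /andP [da /eqP sa].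
case/andP=> /andP [db /eqP sb] /andP [db' /eqP tb].
rewrite !track_ofE //= => -[vtx].
exists (c1 + a), (c1 + b), (c2 + a), (c2 + b); split; [by split=> //; lia | by split=> //; lia |].
split; [lia | exact: vtx | move=> d d0 d1].
have : s (a + d) = t (a + d) by apply: st; lia.
rewrite !Es !Et /shift !addrA !track_ofE; first by case.
- by apply: (in_dom_convex (a := c2 + a) (b := c2 + b)) => //; lia.
- by apply: (in_dom_convex (a := c1 + a) (b := c1 + b)) => //; lia.
Qed.

Lemma track_of_rev_word w : track_of (rev_word w) =1 rev_track (track_of w).
Proof.
move=> e; rewrite /track_of /rev_track.
have -> : in_dom (rev_word w) e = in_dom w (- e).
  by rewrite /in_dom /rev_word /=; case: (wlo w) => [i|]; case: (whi w) => [j|] /=;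
    apply/idP/idP; lia.
by case: ifP.
Qed.

Lemma reading_kiss s t mu nu : reading s mu -> reading t nu -> kiss s t -> kisses mu nu.
Proof.
have fwd c w : shift c (rev_track (track_of w)) =1 shift c (track_of (rev_word w)).
  by move=> e; rewrite /shift track_of_rev_word.
have bwd c g w : g =1 shift c (rev_track (track_of w)) -> rev_track g =1 shift (- c) (track_of w).
  by move=> E e; rewrite /rev_track E /shift /rev_track opprD opprK omap_lflipK.
case=> c1 [Es|Es] [c2 [Et|Et]] K.
- by left; apply: kiss_kiss0 Es Et K.
- by right; apply: kiss_kiss0 Es (fun e => etrans (Et e) (fwd c2 nu e)) K.
- right; apply: (kiss_kiss0 (c2 := - c2)) (bwd _ _ _ Es) _ (kiss_rev K) => e.
  by rewrite /shift track_of_rev_word /rev_track Et /shift opprD opprK.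
- by left; apply: kiss_kiss0 (bwd _ _ _ Es) (bwd _ _ _ Et) (kiss_rev K).
Qed.

Lemma chain_ltgt s e x y : chain s -> s e = Some x -> s (e + 1) = Some y -> ltgt x = lsrc y.
Proof. by move=> ch sx sy; exact: composable_ltgt (ch _ _ _ sx sy). Qed.

Lemma splits_asym f g e : splits f g e -> ~~ splits g f e.
Proof. by case/andP=> /has_dir_true_false/negPf fF _; rewrite /splits fF andbF. Qed.

Definition lo_lt (L : option int) e := if L is Some l then l < e else true.
Definition lt_hi e (R : option int) := if R is Some r then e < r else true.

(* [h] and [g] share the substring strictly between [L] and [R] ([None] standing
   for an infinite end), and at each finite end [h] leaves it along the arrow
   while [g] leaves it against the arrow. *)
Definition cc_segment h g L R := [/\ forall e, lo_lt L e -> lt_hi e R -> h e = g e,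
  oapp (splits h g) true L, oapp (splits h g) true R & isSome L || isSome R].

Lemma kiss_of_splits f g a b : walk_track f -> walk_track g -> a + 1 < b ->
  (forall e, a < e < b -> f e = g e) -> splits g f a -> splits f g b -> kiss f g.
Proof.
move=> [cvf chf _ _] [_ chg _ _] ab agree sa sb; exists a, b; split=> //; first lia.
case/andP: sa => /has_dirP [y ga _] /has_dirP [x fa _].
case/andP: sb => /has_dirP [x' fb _] /has_dirP [y' gb _].
have inner e : a < e < b -> exists z, f e = Some z /\ g e = Some z.
  move=> /[dup] /agree <- /andP [ae eb]; case Ez: (f e) => [z|]; first by exists z.
  by exfalso; apply: (cvf a b e); rewrite ?fa ?fb ?Ez //; lia.
have [z [fz gz]] := inner (a + 1) ltac:(lia).
have [z' [fz' gz']] := inner (b - 1) ltac:(lia).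
have Eb : b - 1 + 1 = b by lia.
rewrite fa ga fb gb /=; split; congr Some.
- by rewrite (chain_ltgt chf fa fz) (chain_ltgt chg ga gz).
- by rewrite -(chain_ltgt chf fz' _) -?(chain_ltgt chg gz' _) ?Eb.
Qed.

Lemma cc_segment_of_diverge f g L R : walk_track f -> walk_track g ->
  ~ kiss f g -> ~ kiss g f -> lo_lt L 0 -> lt_hi 0 R ->
  (forall e, lo_lt L e -> lt_hi e R -> f e = g e) ->
  oapp (diverge f g) true L -> oapp (diverge f g) true R ->
  oapp (splits f g) false L || oapp (splits f g) false R -> cc_segment f g L R.
Proof.
move=> wf wg nfg ngf; case: L => [a|]; case: R => [b|] //= a0 b0 agree dL dR one;
  rewrite ?orbF in one; try by split.
have ab : a + 1 < b by lia.
case/orP: dL => [sa|sa]; case/orP: dR => [sb|sb]; first by split.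
- by case: ngf; apply: kiss_of_splits wg wf ab _ sa sb => e /andP [*]; rewrite agree.
- by case: nfg; apply: kiss_of_splits wf wg ab _ sa sb => e /andP [*]; rewrite agree.
- by case/orP: one => /splits_asym; rewrite ?sa ?sb.
Qed.

Section Divergence.
Hypothesis gentle : locally_gentle Q.

Lemma diverge_after f g b : walk_track f -> walk_track g ->
  f (b - 1) = g (b - 1) -> f (b - 1) <> None -> f b <> g b -> diverge f g b.
Proof.
move=> [_ chf sRf _] [_ chg sRg _] E fb1 fgb; have Eb : b - 1 + 1 = b by lia.
case Ez: (f (b - 1)) fb1 => [z|] // _; have Ez' : g (b - 1) = Some z by rewrite -E.
have next h x : chain h -> h (b - 1) = Some z -> h b = Some x -> composable z x.
  by move=> ch hz hx; apply: ch hz _; rewrite Eb.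
case Ex: (f b) fgb => [x|]; case Ey: (g b) => [y|] // fgb.
- have cx := next f x chf Ez Ex; have cy := next g y chg Ez' Ey.
  have : x.2 != y.2.
    by apply/eqP => same; apply: fgb; congr Some; apply: composable_succ_uniq cx cy same.
  by rewrite /diverge /splits Ex Ey /has_dir /=; case: (x.2); case: (y.2).
- by have := sRg _ _ x Ez'; rewrite Eb => /(_ Ey); rewrite (next f x chf Ez Ex).
- by have := sRf _ _ y Ez; rewrite Eb => /(_ Ex); rewrite (next g y chg Ez' Ey).
Qed.

Lemma diverge_before f g a : walk_track f -> walk_track g ->
  f (a + 1) = g (a + 1) -> f (a + 1) <> None -> f a <> g a -> diverge f g a.
Proof.
move=> wf wg E fa1 fga; have Ea : - (- a - 1) = a + 1 by lia.
rewrite -[a]opprK -diverge_rev; apply: diverge_after; try exact: walk_track_rev.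
- by rewrite /rev_track Ea E.
- by rewrite /rev_track Ea; case: (f (a + 1)) fa1.
- by rewrite /rev_track !opprK => /(can_inj omap_lflipK).
Qed.

Lemma first_diff_right (T : eqType) (u v : int -> T) : u 0 = v 0 ->
  (forall e, 0 <= e -> u e = v e) \/
  exists b, [/\ 0 < b, forall e, 0 <= e < b -> u e = v e & u b <> v b].
Proof.
move=> uv0; case: (classic (exists n : nat, u n%:Z != v n%:Z)) => [diff|same]; last first.
  left=> e e0; apply/eqP/negPn/negP => uv; apply: same; exists `|e|%N.
  by rewrite gez0_abs.
right; case: (ex_minnP diff) => n /eqP uvn min; exists n%:Z; split=> //.
- by case: n uvn {min} => //= n _; lia.
- move=> e /andP [e0 en]; apply/eqP/negPn/negP => uv.
  by have := min `|e|%N; rewrite gez0_abs // => /(_ uv); lia.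
Qed.

Lemma first_divergence_right f g : walk_track f -> walk_track g ->
  f 0 = g 0 -> f 0 <> None ->
  exists R, [/\ lt_hi 0 R, forall e, 0 <= e -> lt_hi e R -> f e = g e &
                 oapp (diverge f g) true R].
Proof.
move=> wf wg fg0 f0; case: (first_diff_right fg0) => [agree|[b [b0 agree fgb]]].
  by exists None; split=> // e e0 _; apply: agree.
have fgb1 : f (b - 1) = g (b - 1) by apply: agree; lia.
exists (Some b); split=> //= [e e0 eb|]; first by apply: agree; rewrite e0.
have [[cvf _ _ _] [cvg _ _ _]] := (wf, wg); apply: (diverge_after wf wg fgb1 _ fgb).
case Efb: (f b) fgb => [x|] fgb.
  by apply: (cvf 0 b (b - 1)) => //; [lia | rewrite Efb].
rewrite fgb1; apply: (cvg 0 b (b - 1)); [lia | by rewrite -fg0 | by case: (g b) fgb].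
Qed.

Lemma first_divergence_left f g : walk_track f -> walk_track g ->
  f 0 = g 0 -> f 0 <> None ->
  exists L, [/\ lo_lt L 0, forall e, lo_lt L e -> e <= 0 -> f e = g e &
                 oapp (diverge f g) true L].
Proof.
move=> wf wg fg0 f0.
have fg0' : rev_track f 0 = rev_track g 0 by rewrite /rev_track oppr0 fg0.
have f0' : rev_track f 0 <> None by rewrite /rev_track oppr0; case: (f 0) f0.
have [R [R0 agree dR]] :=
  first_divergence_right (walk_track_rev wf) (walk_track_rev wg) fg0' f0'.
exists (omap (fun r => - r) R); split.
- by case: R R0 {agree dR} => //= r; lia.
- move=> e Le e0; apply: (can_inj omap_lflipK).
  have := agree (- e); rewrite /rev_track opprK; apply; first lia.
  by case: R Le {R0 dR agree} => //= r; lia.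
- by case: R dR {R0 agree} => //= r; rewrite diverge_rev.
Qed.

Lemma cc_segment_of_lt f g : walk_track f -> walk_track g ->
  ~ kiss f g -> ~ kiss g f -> countercurrent_lt f g ->
  exists L R, [/\ cc_segment f g L R, lo_lt L 0 & lt_hi 0 R].
Proof.
(* Only how [f] leaves the common substring matters: by local gentleness, [g]
   then leaves it against the arrow. *)
move=> wf wg nfg ngf [[[k [k0 agr ne [x fx]]] | [r [r0 agr ne [x fx]]]] _].
- have [fg0 f0] := agr 0 ltac:(lia) (lexx _).
  have sa : splits f g (- k - 1).
    apply: diverge_splits; last by rewrite fx.
    have [fga1 fa1] := agr (- k - 1 + 1) ltac:(lia) ltac:(lia).
    exact: diverge_before wf wg fga1 fa1 ne.
  have [R [R0 agreeR dR]] := first_divergence_right wf wg fg0 f0.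
  exists (Some (- k - 1)), R; split=> //=; last lia.
  apply: cc_segment_of_diverge => //=; [lia | | by rewrite /diverge sa | by rewrite sa].
  move=> e ae eR; case: (lerP e 0) => e0; first by apply: (agr e _ e0).1; lia.
  by apply: agreeR => //; lia.
- have [fg0 f0] := agr 0 (lexx _) ltac:(lia).
  have sb : splits f g (r + 1).
    apply: diverge_splits; last by rewrite fx.
    have [fgb1 fb1] := agr (r + 1 - 1) ltac:(lia) ltac:(lia).
    exact: diverge_after wf wg fgb1 fb1 ne.
  have [L [L0 agreeL dL]] := first_divergence_left wf wg fg0 f0.
  exists L, (Some (r + 1)); split=> //=; last lia.
  apply: cc_segment_of_diverge => //=; [lia | | by rewrite /diverge sb | by rewrite sb orbT].
  move=> e Le er; case: (lerP e 0) => e0; first exact: agreeL.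
  by apply: (agr e _ _).1; lia.
Qed.

End Divergence.

Lemma cc_segment_eq h h' g g' L R : h =1 h' -> g =1 g' ->
  cc_segment h g L R -> cc_segment h' g' L R.
Proof.
move=> Eh Eg [agree sL sR LR]; split=> //.
- by move=> e Le eR; rewrite -Eh -Eg agree.
- by case: L sL {agree LR} => //= l; rewrite /splits -Eh -Eg.
- by case: R sR {agree LR} => //= r; rewrite /splits -Eh -Eg.
Qed.

Lemma cc_segment_shift c h g L R : cc_segment h g L R ->
  cc_segment (shift c h) (shift c g) (omap (fun l => l - c) L) (omap (fun r => r - c) R).
Proof.
move=> [agree sL sR LR]; split.
- move=> e Le eR; apply: agree.
  + by case: L Le {sL LR} => //= l; lia.
  + by case: R eR {sR LR} => //= r; lia.
- by case: L sL {agree LR} => //= l; rewrite /splits /shift subrKC.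
- by case: R sR {agree LR} => //= r; rewrite /splits /shift subrKC.
- by case: L LR {agree sL sR}; case: R.
Qed.

Lemma cc_segment_mirror h g L R : cc_segment h g L R ->
  cc_segment (mirror h) (mirror g) (omap -%R R) (omap -%R L).
Proof.
move=> [agree sL sR LR]; split.
- move=> e Re eL; apply: agree.
  + by case: L eL {sL LR} => //= l; lia.
  + by case: R Re {sR LR} => //= r; lia.
- by case: R sR {agree LR} => //= r; rewrite /splits /mirror opprK.
- by case: L sL {agree LR} => //= l; rewrite /splits /mirror opprK.
- by case: L LR {agree sL sR}; case: R.
Qed.

Definition covered_by (G : track -> Prop) h d :=
  exists g L R, [/\ G g, cc_segment h g L R, lo_lt L d & lt_hi d R].

Lemma covered_by_shift (G : track -> Prop) h h' d :
  (forall c g, G g -> G (shift c g)) -> h' =1 shift d h ->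
  covered_by G h' 0 -> covered_by G h d.
Proof.
move=> Gshift E [g [L [R [Gg seg L0 R0]]]].
exists (shift (- d) g), (omap (fun l => l - - d) L), (omap (fun r => r - - d) R).
split; first exact: Gshift.
- apply: cc_segment_eq (cc_segment_shift (- d) (cc_segment_eq E (frefl g) seg)) => // e.
  by rewrite /shift addNKr.
- by case: L L0 {seg} => //= l; lia.
- by case: R R0 {seg} => //= r; lia.
Qed.

Definition cc_right_end h g r := exists2 L, cc_segment h g L (Some r) & lo_lt L 0.
Definition cc_left_end h g l := exists2 R, cc_segment h g (Some l) R & lt_hi 0 R.

Section Ascent.
Variables (G : track -> Prop) (h : track).
Hypothesis G_chain : forall g, G g -> chain g.
Hypothesis G_no_kiss : forall s t, G s -> G t -> ~ kiss s t.
Hypothesis Gh : G h.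
Hypothesis h_convex : convex h.

(* [g2] would kiss [g1] along [h] between [l2] and [r1]. *)
Lemma cc_segments_nested g1 g2 L1 r1 l2 R2 : G g1 -> G g2 ->
  cc_segment h g1 L1 (Some r1) -> cc_segment h g2 (Some l2) R2 ->
  lo_lt L1 l2 -> l2 < r1 -> lt_hi r1 R2 -> False.
Proof.
move=> G1 G2 [agree1 _ /= s1 _] [agree2 /= s2 _ _] L1l2 lr r1R2.
have hg1 e : l2 <= e -> e < r1 -> h e = g1 e.
  by move=> *; apply: agree1; case: L1 L1l2 => //= l; lia.
have hg2 e : l2 < e -> e <= r1 -> h e = g2 e.
  by move=> *; apply: agree2; case: R2 r1R2 => //= r; lia.
case/andP: (s1) => /has_dirP [x hr _] _; case/andP: (s2) => /has_dirP [y hl _] _.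
have hsome e : l2 <= e <= r1 -> exists z, h e = Some z.
  move=> le; case Ez: (h e) => [z|]; first by exists z.
  by exfalso; apply: (h_convex le); rewrite ?hl ?hr ?Ez.
have [z hz] := hsome (l2 + 1) ltac:(lia); have [z' hz'] := hsome (r1 - 1) ltac:(lia).
have Er : r1 - 1 + 1 = r1 by lia.
apply: (G_no_kiss G2 G1); exists l2, r1; split=> //.
- by rewrite /splits -hg1.
- by rewrite /splits -hg2.
- by move=> e /andP [le er]; rewrite -hg1 -?hg2 //; lia.
case/andP: s2 => _ /has_dirP [y' gl _]; case/andP: s1 => _ /has_dirP [x' gr _].
rewrite -(hg1 l2) // -(hg2 r1) // gl gr hl hr /=; split; congr Some.
- have gz : g2 (l2 + 1) = Some z by rewrite -hg2 //; lia.
  by rewrite (chain_ltgt (G_chain Gh) hl hz) (chain_ltgt (G_chain G2) gl gz).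
- have gz' : g1 (r1 - 1) = Some z' by rewrite -hg1 //; lia.
  have hx : h (r1 - 1 + 1) = Some x by rewrite Er.
  have gx : g1 (r1 - 1 + 1) = Some x' by rewrite Er.
  by rewrite -(chain_ltgt (G_chain Gh) hz' hx) -(chain_ltgt (G_chain G1) gz' gx).
Qed.

Hypothesis h_covered : forall d, has_dir (h d) true -> covered_by G h d.

Lemma cc_segment_step_right g L r : G g -> cc_segment h g L (Some r) -> lo_lt L 0 ->
  exists g' L' R', [/\ G g', cc_segment h g' L' R', lo_lt L' 0 & lt_hi r R'].
Proof.
move=> Gg seg L0; have [_ _ /andP [hr _] _] := seg.
have [g' [L' [R' [Gg' seg' L'r rR']]]] := h_covered hr.
exists g', L', R'; split=> //; case: L' seg' L'r => // l' seg' /= l'r.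
case Ll': (lo_lt L l'); first by case: (cc_segments_nested Gg Gg' seg seg' Ll' l'r rR').
by case: L L0 Ll' {seg} => //= l; lia.
Qed.

Lemma cc_segment_step_left g l : G g -> cc_segment h g (Some l) None ->
  exists g' l', [/\ G g', cc_segment h g' (Some l') None & l' < l].
Proof.
move=> Gg seg; have [_ /andP [hl _] _ _] := seg.
have [g' [L' [R' [Gg' seg' L'l lR']]]] := h_covered hl.
case: R' seg' lR' => [r'|] seg' lR'.
  by case: (cc_segments_nested Gg' Gg seg' seg L'l lR' isT).
by case: L' seg' L'l => [l'|] seg' L'l; [exists g', l' | case: seg'].
Qed.

Hypothesis right_ends_bounded : exists M, forall g r, G g -> cc_right_end h g r -> r < M.
Hypothesis left_ends_bounded : exists M, forall g l, G g -> cc_left_end h g l -> - l < M.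

Lemma cc_segment_right_open : has_dir (h 0) true ->
  exists g L, [/\ G g, cc_segment h g L None & lo_lt L 0].
Proof.
move=> h0; apply: NNPP => none.
have far n : exists g r, G g /\ cc_right_end h g r /\ n%:Z <= r.
  elim: n => [|n [g [r [Gg [[L seg L0] nr]]]]].
    have [g [L [[r|] [Gg seg L0 r0]]]] := h_covered h0; last by case: none; exists g, L.
    by exists g, r; split=> //; split; [exists L | move: r0 => /=; lia].
  have [g' [L' [[r'|] [Gg' seg' L'0 rr']]]] := cc_segment_step_right Gg seg L0.
    by exists g', r'; split=> //; split; [exists L' | move: rr' => /=; lia].
  by case: none; exists g', L'.
have [M bound] := right_ends_bounded.
have [g [r [Gg [end_r Mr]]]] := far `|M|%N.
by have := bound _ _ Gg end_r; lia.
Qed.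

Lemma cc_covering_absurd : has_dir (h 0) true -> False.
Proof.
move=> /cc_segment_right_open [g [[l|] [Gg seg l0]]]; last by case: seg.
have far n : exists g l', G g /\ cc_segment h g (Some l') None /\ l' <= - n%:Z.
  elim: n => [|n [g1 [l1 [G1 [seg1 l1n]]]]]; first by exists g, l; do 2 split=> //; move: l0 => /=; lia.
  have [g' [l' [G' seg' l'l1]]] := cc_segment_step_left G1 seg1.
  by exists g', l'; do 2 split=> //; lia.
have [M bound] := left_ends_bounded.
have [g1 [l1 [G1 [seg1 l1M]]]] := far `|M|%N.
by have := bound _ _ G1 (ex_intro2 _ _ None seg1 isT); lia.
Qed.

End Ascent.

Lemma dir_changes_bounded s : dir_const_right s ->
  exists B, forall e, has_dir (s e) true -> has_dir (s (e + 1)) false -> e < B.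
Proof.
case=> N HN; exists N => e se se1; rewrite ltNge; apply/negP => Ne.
have Ne1 : N <= e + 1 by lia.
by move: se se1; rewrite /has_dir (HN e) // (HN (e + 1)) // => /eqP ->.
Qed.

Lemma dir_tails_const_mirror s : dir_tails_const s -> dir_tails_const (mirror s).
Proof.
case=> R L; split=> //; apply: (dir_const_right_transfer (c := 0) (op := id)) R => e.
by rewrite /mirror opprK add0r.
Qed.

(* Only the case where [h] is eventually direct needs work.  There [s] turns from
   direct to inverse at [c + r - 1], which the right tail of [s] bounds; and [c + N]
   cannot lie in the left tail of [s], where [s] would be direct, contradicting the
   left end of the segment or the non-straightness of [h]. *)
Lemma cc_right_end_bounded h s : dir_tails_const h -> dir_tails_const s ->
  (exists e, ~~ has_dir (h e) true) ->
  exists M, forall c r, cc_right_end h (shift c s) r -> r < M.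
Proof.
move=> [[N0 hN0] _] [sR [A sA]] [e0 ne0].
have [N [N0' hN]] : exists N, 0 <= N /\ forall e, N <= e -> dir (h e) = dir (h N).
  by exists (Num.max N0 0); split=> [|e le]; [lia | rewrite !hN0 //; lia].
case hNt: (dir (h N) == Some true); last first.
  exists N => c r [L [_ _ /andP [hr _] _] _]; rewrite ltNge; apply/negP => Nr.
  by move: hr; rewrite /has_dir hN // hNt.
have hdir e : N <= e -> has_dir (h e) true by move=> le; rewrite /has_dir hN.
have [B sB] := dir_changes_bounded sR.
exists (Num.max (N + 1) (B + A + N + 1)) => c r [L [agree gL /andP [_ gr] _] L0].
rewrite ltNge; apply/negP => Mr.
have hs e : lo_lt L e -> e < r -> h e = s (c + e) by exact: agree.
have Lle e : 0 <= e -> lo_lt L e by case: L L0 {agree gL hs} => //= l; lia.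
have sN : has_dir (s (c + N)) true by rewrite -hs ?Lle ?hdir //; lia.
have cB : c + (r - 1) < B.
  by apply: sB; [rewrite -hs ?Lle ?hdir //; lia | rewrite -addrA subrK].
suff : - A < c + N by lia.
rewrite ltNge; apply/negP => cNA.
have sleft e : e <= c + N -> has_dir (s e) true.
  have E e' : e' <= - A -> dir (s e') = dir (s (- A)).
    by move=> eA; have := sA (- e'); rewrite /mirror opprK; apply; lia.
  by move=> eN; rewrite /has_dir E -?(E (c + N)) //; lia.
case: L agree gL L0 hs Lle => [l|] _ gL L0 hs _.
- by case/andP: gL => _; apply/negP/has_dir_true_false/sleft; move: L0 => /=; lia.
- move/negP: ne0; apply; case: (lerP N e0) => [Ne|eN]; first exact: hdir.
  by rewrite hs //; [apply: sleft | ]; lia.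
Qed.

Lemma cc_left_end_bounded h s : dir_tails_const h -> dir_tails_const s ->
  (exists e, ~~ has_dir (h e) true) ->
  exists M, forall c l, cc_left_end h (shift c s) l -> - l < M.
Proof.
move=> th ts [e0 ne0].
have nd : exists e, ~~ has_dir (mirror h e) true by exists (- e0); rewrite /mirror opprK.
have [M bound] :=
  cc_right_end_bounded (dir_tails_const_mirror th) (dir_tails_const_mirror ts) nd.
exists M => c l [R seg R0]; apply: (bound (- c)); exists (omap -%R R).
- apply: cc_segment_eq (cc_segment_mirror seg) => // e.
  by rewrite /mirror /shift opprD opprK.
- by case: R R0 {seg} => //= r; lia.
Qed.

Definition face_reading (F : seq (word Q)) g := exists2 nu, List.In nu F & reading g nu.

Lemma face_reading_walk_track F g : (forall nu, List.In nu F -> is_walk nu) ->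
  face_reading F g -> walk_track g.
Proof. by move=> walks [nu /walks]; exact: reading_walk_track. Qed.

Lemma face_reading_no_kiss F : is_nk_face F ->
  forall s t, face_reading F s -> face_reading F t -> ~ kiss s t.
Proof. by move=> [_ nk] s t [mu Fmu rs] [nu Fnu rt] /(reading_kiss rs rt); apply: nk. Qed.

Lemma face_reading_shift F c g : face_reading F g -> face_reading F (shift c g).
Proof. by case=> nu Fnu rg; exists nu => //; exact: reading_shift. Qed.

Lemma face_bound F (P : track -> int -> Prop) :
  (forall nu, List.In nu F -> is_walk nu) ->
  (forall g g' k, g =1 g' -> P g k -> P g' k) ->
  (forall s, dir_tails_const s -> exists M, forall c k, P (shift c s) k -> k < M) ->
  exists M, forall g k, face_reading F g -> P g k -> k < M.
Proof.
move=> walks Peq bnd.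
suff [M HM] : exists M, forall nu, List.In nu F ->
    forall k, (exists2 g, reading g nu & P g k) -> k < M.
  by exists M => g k [nu Fnu rd] Pgk; apply: (HM nu Fnu); exists g.
apply: list_bound => nu /walks /dir_tails_const_of tnu.
have [M1 H1] := bnd _ tnu; have [M2 H2] := bnd _ (dir_tails_const_rev tnu).
exists (Num.max M1 M2) => k [g [c [E|E]] Pgk].
- by have := H1 c k (Peq _ _ _ E Pgk); lia.
- by have := H2 c k (Peq _ _ _ E Pgk); lia.
Qed.

Lemma face_right_ends_bounded F h : (forall nu, List.In nu F -> is_walk nu) ->
  dir_tails_const h -> (exists e, ~~ has_dir (h e) true) ->
  exists M, forall g r, face_reading F g -> cc_right_end h g r -> r < M.
Proof.
move=> walks th nd; apply: face_bound walks _ _ => [g g' k E [L seg L0] | s ts].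
- by exists L => //; exact: cc_segment_eq (frefl h) E seg.
- exact: cc_right_end_bounded th ts nd.
Qed.

Lemma face_left_ends_bounded F h : (forall nu, List.In nu F -> is_walk nu) ->
  dir_tails_const h -> (exists e, ~~ has_dir (h e) true) ->
  exists M, forall g l, face_reading F g -> cc_left_end h g l -> - l < M.
Proof.
move=> walks th nd.
suff [M bound] : exists M, forall g k, face_reading F g -> cc_left_end h g (- k) -> k < M.
  by exists M => g l Gg endl; apply: bound Gg _; rewrite opprK.
apply: face_bound walks _ _ => [g g' k E [R seg R0] | s ts].
- by exists R => //; exact: cc_segment_eq (frefl h) E seg.
- have [M bound] := cc_left_end_bounded th ts nd.
  by exists M => c k /bound; rewrite opprK.
Qed.

Lemma has_dir_view0 w p : in_dom w p -> has_dir (view w p 0) true.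
Proof. by move=> dp; rewrite /view; case: ifP => E; rewrite /= ?addr0 ?subr0 dp /has_dir /= ?E. Qed.

Lemma view_direct_position w p d : has_dir (view w p d) true ->
  exists q, [/\ in_dom w q, (wlet w q).2 = (wlet w p).2 & view w q =1 shift d (view w p)].
Proof.
rewrite viewE /shift; case Ep: (wlet w p).2.
- rewrite has_dir_track_of => /andP [dq /eqP Eq]; exists (p + d); split; rewrite ?Eq //.
  by move=> e; rewrite !viewE Eq Ep /shift addrA.
- rewrite has_dir_rev has_dir_track_of opprD opprK => /andP [dq /eqP Eq].
  exists (p - d); split; rewrite ?Eq //.
  by move=> e; rewrite !viewE Eq Ep /shift; congr rev_track; lia.
Qed.

Lemma view_not_all_direct w p : ~ is_inf_straight w ->
  exists e, ~~ has_dir (view w p e) true.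
Proof.
move=> not_straight; apply: NNPP => all_direct.
have direct e : has_dir (view w p e) true.
  by apply: NNPP => ne; apply: all_direct; exists e; apply/negP.
have dl l : in_dom w l && ((wlet w l).2 == (wlet w p).2).
  have := direct (if (wlet w p).2 then l - p else p - l); rewrite viewE /shift.
  case: (wlet w p).2; rewrite ?has_dir_rev has_dir_track_of ?subrKC //.
  by rewrite addKr opprK.
apply: not_straight; split; [|split].
- by case E: (wlo w) => [i|] //; have := dl i; rewrite /in_dom E ltxx.
- by case E: (whi w) => [j|] //; have := dl j; rewrite /in_dom E ltxx andbF.
- by move=> l; have /andP [_ /eqP ->] := dl l; have /andP [_ /eqP ->] := dl 0.
Qed.

Lemma not_maximal_covered F w q : locally_gentle Q -> is_nk_face F -> List.In w F ->
  ~ maximal_in_Fbeta F w q -> covered_by (face_reading F) (view w q) 0.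
Proof.
move=> gentle face wF notmax; apply: NNPP => uncovered.
apply: notmax => nu Fnu q' _ _ _ lt; apply: uncovered.
have Gf : face_reading F (view w q) by exists w => //; exact: view_reading.
have Gg : face_reading F (view nu q') by exists nu => //; exact: view_reading.
have W := face_reading_walk_track face.1; have NK := face_reading_no_kiss face.
have [L [R [seg L0 R0]]] :=
  cc_segment_of_lt gentle (W _ Gf) (W _ Gg) (NK _ _ Gf Gg) (NK _ _ Gg Gf) lt.
by exists (view nu q'), L, R.
Qed.

End Tracks.

Theorem lemma5p10 (Q Qbl : bquiver)
    (iv : qvert Q -> qvert Qbl) (ia : qarr Q -> qarr Qbl)
    (F : seq (word Qbl)) (w : word Qbl) (p : int) :
  locally_gentle Q ->
  is_blossoming iv ia ->
  is_nk_face F ->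
  List.In w F ->
  in_dom w p ->
  ~ is_inf_straight w ->
  exists q : int,
    [/\ in_dom w q, (wlet w q).2 = (wlet w p).2 & maximal_in_Fbeta F w q].
Proof.
move=> _ [_ _ _ _ [_ _ _ gentle]] face wF dp not_straight.
have [walks _] := face; apply: NNPP => none_maximal.
have G_walk := face_reading_walk_track walks.
have Gh : face_reading F (view w p) by exists w => //; exact: view_reading.
have th := reading_dir_tails_const (walks w wF) (view_reading w p).
have nd := view_not_all_direct p not_straight.
apply: (cc_covering_absurd (G := face_reading F) (h := view w p)) (has_dir_view0 dp).
- by move=> g /G_walk [].
- exact: face_reading_no_kiss face.
- exact: Gh.
- by case: (G_walk _ Gh).
- move=> d /view_direct_position [q [dq same Eq]].
  apply: covered_by_shift (@face_reading_shift _ F) Eq _.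
  apply: not_maximal_covered gentle face wF _ => maxq.
  by apply: none_maximal; exists q.
- exact: face_right_ends_bounded walks th nd.
- exact: face_left_ends_bounded walks th nd.
Qed.
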